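(* Let $1<\alpha\le2$, $\delta\in(1-\frac\alpha2,1)$, and let $f(x)=a_0+a_1x+\dots+a_nx^n$ be a real polynomial. Then $F:C^\delta(0,1)\to H^{-\alpha/2}_2$, $F(u)=\frac{d}{dx}f(u(\cdot))$, is well defined, and for every $R>0$ there is $C_R>0$ such that for all $u,v\in C^\delta(0,1)$ with $|u|_{C^\delta},|v|_{C^\delta}\le R$, $$|F(u)-F(v)|_{H^{-\alpha/2}_2}\le C_R\,|u-v|_{C^\delta}.$$
   Context: Let $e_k(x)=\sqrt2\sin(k\pi x)$, $k\ge1$, be the $L^2(0,1)$-orthonormal eigenfunctions of $A=-\partial_x^2$ with Dirichlet boundary conditions on $(0,1)$, with eigenvalues $\lambda_k=(k\pi)^2$. For $\gamma\in\mathbb R$, $H^\gamma_2$ is the space of $v=\sum_k v_ke_k$ with $|v|^2_{H^\gamma_2}=\sum_k\lambda_k^\gamma v_k^2<\infty$ (for $\gamma<0$ the completion of $L^2(0,1)$ in this norm). For $\delta\in(0,1)$, $C^\delta(0,1)$ is the space of bounded continuous functions on $[0,1]$ with norm $|g|_{C^\delta}=\sup_x|g(x)|+\sup_{x\ne y}|g(x)-g(y)|/|x-y|^\delta$. For $u\in C^\delta(0,1)$, $F(u)=\partial_x(f(u))$ is the distribution with coefficients $\langle F(u),e_k\rangle:=-\int_0^1 f(u(x))e_k'(x)\,dx$. *)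

From Stdlib Require Import Reals Lra Classical ClassicalEpsilon.
Open Scope R_scope.

(* Derivative of e_k(x) = sqrt 2 * sin (k pi x). *)
Definition ek' (k : nat) (x : R) : R :=
  sqrt 2 * (INR k * PI) * cos (INR k * PI * x).

Definition lam (k : nat) : R := (INR k * PI) ^ 2.

Definition polyR (a : nat -> R) (n : nat) (x : R) : R :=
  sum_f_R0 (fun i => a i * x ^ i) n.

(* Total Riemann integral over [a,b]: the Riemann integral when it exists,
   0 otherwise (integrability is asserted separately in the theorem). *)
Definition Rint (g : R -> R) (a b : R) : R :=
  match excluded_middle_informative (exists pr : Riemann_integrable g a b, True) with
  | left H => let (pr, _) := constructive_indefinite_description _ H in RiemannInt pr
  | right _ => 0
  end.

(* <F(u), e_k> := - \int_0^1 f(u(x)) e_k'(x) dx, f = polyR a n. *)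
Definition Fcoef (a : nat -> R) (n : nat) (u : R -> R) (k : nat) : R :=
  - Rint (fun x => polyR a n (u x) * ek' k x) 0 1.

(* A bounds sup_{[0,1]} |u| and B bounds the delta-Hoelder seminorm on [0,1].
   |u|_{C^delta} <= R  iff  exists such A B with A + B <= R  (sup = least bound),
   and  X <= C |u|_{C^delta}  iff  X <= C (A+B) for all such A B (C >= 0). *)
Definition holder_bounds (delta : R) (u : R -> R) (A B : R) : Prop :=
  (forall x, 0 <= x <= 1 -> Rabs (u x) <= A) /\
  (forall x y, 0 <= x <= 1 -> 0 <= y <= 1 -> x <> y ->
     Rabs (u x - u y) <= B * Rpower (Rabs (x - y)) delta).

Definition in_Cdelta (delta : R) (u : R -> R) : Prop :=
  exists A B, holder_bounds delta u A B.

(* Summand of |w|^2_{H^gamma_2} = sum_{k>=1} lambda_k^gamma w_k^2, index m <-> k = m+1. *)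
Definition Hterm (gamma : R) (w : nat -> R) (m : nat) : R :=
  Rpower (lam (S m)) gamma * (w (S m)) ^ 2.

(* Since [e_k' = sqrt 2 * k pi * cos (k pi x)], the squared [H^{-alpha/2}_2] norm of
   [F(u) - F(v)] is [2 pi^(2-alpha) sum_k k^(2-alpha) b_k^2], where [b_k] are the cosine
   coefficients on [0, 1] of [g = f(u) - f(v)].  A second-difference estimate for
   polynomials on bounded sets makes [g] delta-Hoelder with constant
   [C_R |u - v|_{C^delta}].  For a delta-Hoelder [g] with constant [K], Bessel's inequality
   for the second difference [G x - (G (x + h) + G (x - h)) / 2] of its even 2-periodic
   extension [G] gives [sum_k (1 - cos (k pi h))^2 b_k^2 <= K^2 h^(2 delta) / 2]; summing
   these over [h = 2^-(j+1)] with weights [2^((j+1)(2-alpha))] bounds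
   [sum_k k^(2-alpha) b_k^2] by a geometric series, convergent because
   [2 - alpha < 2 delta]. *)

From Stdlib Require Import Reals Lra Lia Psatz ClassicalEpsilon FunctionalExtensionality.
From Coquelicot Require Import Coquelicot.
Open Scope R_scope.

Definition cosk (k : nat) (x : R) : R := cos (INR k * PI * x).

Lemma continuous_cosk (k : nat) (x : R) : continuous (cosk k) x.
Proof.
  apply (continuous_cos_comp (fun y => INR k * PI * y)).
  apply (continuous_mult (fun _ => INR k * PI) (fun y => y));
    [apply continuous_const | apply continuous_id].
Qed.

Lemma continuous_pow_comp (f : R -> R) (n : nat) (x : R) :
  continuous f x -> continuous (fun y => f y ^ n) x.
Proof.
  intros Hf; induction n as [|n IH]; simpl.
  - apply continuous_const.
  - apply (continuous_mult f (fun y => f y ^ n)); auto.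
Qed.

Ltac continuity_step := match goal with
 | |- continuous (fun _ => ?c) _ => apply continuous_const
 | |- continuous (fun y => y) _ => apply continuous_id
 | |- continuous (cosk _) _ => apply continuous_cosk
 | |- continuous (fun y => @?f y + @?g y) _ => apply (continuous_plus f g)
 | |- continuous (fun y => @?f y - @?g y) _ => apply (continuous_minus f g)
 | |- continuous (fun y => - @?f y) _ => apply (continuous_opp f)
 | |- continuous (fun y => @?f y * @?g y) _ => apply (continuous_mult f g)
 | |- continuous (fun y => cos (@?f y)) _ => apply (continuous_cos_comp f)
 | |- continuous (fun y => Rabs (@?f y)) _ => apply (continuous_Rabs_comp f)
 | |- continuous (fun y => (@?f y) ^ ?n) _ => apply (continuous_pow_comp f n)
 | H : forall x, continuous ?g x |- continuous ?g _ => apply H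
 | |- continuous (fun y => cosk ?k (@?f y)) _ =>
     apply (continuous_comp f (cosk k)); [| apply continuous_cosk]
 | H : forall x, continuous ?g x |- continuous (fun y => ?g (@?f y)) _ =>
     apply (continuous_comp f g); [| apply H]
 end.
Ltac solve_continuity := repeat continuity_step.

Lemma Rpower_pos (x y : R) : 0 < Rpower x y.
Proof. apply exp_pos. Qed.

Definition holder (d K : R) (g : R -> R) : Prop :=
  forall x y, Rabs (g x - g y) <= K * Rpower (Rabs (x - y)) d.

Lemma holder_continuous (d K : R) (g : R -> R) :
  0 < d -> 0 <= K -> holder d K g -> forall x, continuous g x.
Proof.
  intros Hd HK Hg x. apply continuity_pt_filterlim.
  unfold continuity_pt, continue_in, limit1_in, limit_in; simpl.
  intros eps Heps.
  exists (Rpower (eps / (K + 1)) (/ d)). split; [apply Rpower_pos|].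
  intros y [_ Hy]; unfold R_dist in *.
  destruct (Req_dec y x) as [->|Hne].
  { unfold Rminus; rewrite Rplus_opp_r, Rabs_R0; lra. }
  assert (Hp : Rpower (Rabs (y - x)) d < eps / (K + 1)).
  { replace (eps / (K + 1)) with (Rpower (Rpower (eps / (K + 1)) (/ d)) d).
    - apply Rlt_Rpower_l; auto. split; auto. apply Rabs_pos_lt. lra.
    - rewrite Rpower_mult, Rinv_l by lra. apply Rpower_1, Rdiv_lt_0_compat; lra. }
  assert (K * Rpower (Rabs (y - x)) d <= K * (eps / (K + 1))) by (apply Rmult_le_compat_l; lra).
  assert (K * (eps / (K + 1)) < eps).
  { apply (Rmult_lt_reg_r (K + 1)); [lra|]. field_simplify; nra. }
  specialize (Hg y x). lra.
Qed.

Lemma holder_comp_contraction (d K : R) (g r : R -> R) :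
  0 <= d -> 0 <= K -> holder d K g -> (forall x y, Rabs (r x - r y) <= Rabs (x - y)) ->
  holder d K (fun x => g (r x)).
Proof.
  intros Hd HK Hg Hr x y.
  destruct (Req_dec (r x) (r y)) as [E|E].
  - rewrite E, Rminus_diag, Rabs_R0. apply Rmult_le_pos; auto. left; apply Rpower_pos.
  - eapply Rle_trans; [apply Hg|]. apply Rmult_le_compat_l; auto.
    apply Rle_Rpower_l; auto. split; auto. apply Rabs_pos_lt. lra.
Qed.

(* An equation between [RInt] terms is stated in a Coquelicot carrier that [ring] and
   [field] do not recognise as [R]. *)
Ltac retype_eq_R :=
  repeat match goal with |- context [RInt ?f ?a ?b] =>
    let I := fresh "I" in generalize (RInt f a b : R); intro I end;
  lazymatch goal with |- @eq _ ?a ?b => change (@eq R a b) end.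
Ltac ring_R := retype_eq_R; ring.
Ltac field_R := retype_eq_R; field.

Section ContinuousIntegrals.

Variables f g : R -> R.
Hypothesis Hf : forall x, continuous f x.
Hypothesis Hg : forall x, continuous g x.

Lemma ex_RInt_continuous_R (a b : R) : ex_RInt f a b.
Proof. apply (ex_RInt_continuous (V := R_CompleteNormedModule)); auto. Qed.

Lemma RInt_plus_R (a b : R) : RInt (fun x => f x + g x) a b = RInt f a b + RInt g a b.
Proof. apply (RInt_plus f g); apply ex_RInt_continuous; auto. Qed.

Lemma RInt_minus_R (a b : R) : RInt (fun x => f x - g x) a b = RInt f a b - RInt g a b.
Proof. apply (RInt_minus f g); apply ex_RInt_continuous; auto. Qed.

Lemma RInt_scal_R (c a b : R) : RInt (fun x => c * f x) a b = c * RInt f a b.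
Proof. apply (RInt_scal f); apply ex_RInt_continuous_R. Qed.

Lemma RInt_Chasles_R (a b c : R) : RInt f a b + RInt f b c = RInt f a c.
Proof. apply (RInt_Chasles f); apply ex_RInt_continuous_R. Qed.

Lemma RInt_shift_R (v a b : R) : RInt (fun x => f (x + v)) a b = RInt f (a + v) (b + v).
Proof.
  rewrite <- (Rmult_1_l a), <- (Rmult_1_l b) at 2.
  rewrite <- (RInt_comp_lin f 1 v a b) by apply ex_RInt_continuous_R.
  apply RInt_ext; intros x _. unfold scal; simpl; unfold mult; simpl. now rewrite !Rmult_1_l.
Qed.

Lemma RInt_reflect_R (c a b : R) : RInt (fun x => f (c - x)) a b = RInt f (c - b) (c - a).
Proof.
  rewrite <- (opp_RInt_swap f) by apply ex_RInt_continuous_R.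
  replace (c - a) with (-1 * a + c) by ring. replace (c - b) with (-1 * b + c) by ring.
  rewrite <- (RInt_comp_lin f (-1) c a b) by apply ex_RInt_continuous_R.
  rewrite (RInt_ext (fun y => scal (-1) (f (-1 * y + c))) (fun y => -1 * f (c - y))).
  - rewrite (RInt_scal (fun y => f (c - y))).
    + unfold opp, scal; simpl; unfold mult; simpl. ring_R.
    + apply ex_RInt_continuous; intros x _; solve_continuity.
  - intros x _. unfold scal; simpl; unfold mult; simpl.
    replace (-1 * x + c) with (c - x) by ring. reflexivity.
Qed.

End ContinuousIntegrals.

Lemma RInt_const_R (c a b : R) : RInt (fun _ => c) a b = (b - a) * c.
Proof. rewrite RInt_const. reflexivity. Qed.

Lemma sin_INR_PI (m : nat) : sin (INR m * PI) = 0.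
Proof. apply sin_eq_0_1. exists (Z.of_nat m). now rewrite INR_IZR_INZ. Qed.

Lemma RInt_cosk (m : nat) : m <> 0%nat -> RInt (cosk m) 0 1 = 0.
Proof.
  intros Hm. set (c := INR m * PI).
  assert (Hc : c <> 0) by (apply Rmult_integral_contrapositive_currified;
                           [apply not_0_INR | apply PI_neq0]; auto).
  apply is_RInt_unique.
  assert (E : minus (sin (c * 1) / c) (sin (c * 0) / c) = 0).
  { rewrite Rmult_1_r, Rmult_0_r, sin_0, (sin_INR_PI m : sin c = 0).
    unfold minus, plus, opp; simpl. field. auto. }
  rewrite <- E at 2.
  apply (is_RInt_derive (V := R_CompleteNormedModule) (fun x => sin (c * x) / c)).
  - intros x _. auto_derive; auto. unfold cosk. fold c. field. auto.
  - intros x _. apply continuous_cosk.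
Qed.

Lemma RInt_cosk0 : RInt (cosk 0) 0 1 = 1.
Proof.
  rewrite (RInt_ext (cosk 0) (fun _ => 1)), RInt_const_R; [lra|].
  intros x _; unfold cosk; simpl. rewrite !Rmult_0_l; apply cos_0.
Qed.

Lemma cosk_mul (j k : nat) (x : R) :
  cosk j x * cosk k x = / 2 * cosk (j + k) x + / 2 * cosk (Nat.max j k - Nat.min j k) x.
Proof.
  unfold cosk. rewrite plus_INR, minus_INR by lia.
  replace ((INR j + INR k) * PI * x) with (INR j * PI * x + INR k * PI * x) by ring.
  rewrite cos_plus.
  destruct (Nat.le_ge_cases j k) as [H|H].
  - rewrite Nat.max_r, Nat.min_l by lia.
    replace ((INR k - INR j) * PI * x) with (INR k * PI * x - INR j * PI * x) by ring.
    rewrite cos_minus. field.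
  - rewrite Nat.max_l, Nat.min_r by lia.
    replace ((INR j - INR k) * PI * x) with (INR j * PI * x - INR k * PI * x) by ring.
    rewrite cos_minus. field.
Qed.

Lemma RInt_cosk_mul (j k : nat) : (1 <= j)%nat -> (1 <= k)%nat ->
  RInt (fun x => cosk j x * cosk k x) 0 1 = if Nat.eq_dec j k then / 2 else 0.
Proof.
  intros Hj Hk. rewrite (RInt_ext _ _ 0 1 (fun x _ => cosk_mul j k x)).
  rewrite RInt_plus_R, !RInt_scal_R by (intros; solve_continuity).
  rewrite (RInt_cosk (j + k)) by lia.
  destruct (Nat.eq_dec j k) as [<-|Hne].
  - rewrite Nat.max_id, Nat.min_id, Nat.sub_diag, RInt_cosk0, Rmult_0_r, Rmult_1_r. apply Rplus_0_l.
  - rewrite (RInt_cosk (Nat.max j k - Nat.min j k)) by lia. rewrite Rmult_0_r. apply Rplus_0_r.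
Qed.

Fixpoint fsum (F : nat -> R) (n : nat) : R :=
  match n with O => 0 | S n => fsum F n + F n end.

Lemma fsum_ext (F G : nat -> R) (n : nat) :
  (forall i, (i < n)%nat -> F i = G i) -> fsum F n = fsum G n.
Proof. induction n; intros H; simpl; auto. rewrite IHn, H; auto. Qed.

Lemma fsum_le (F G : nat -> R) (n : nat) :
  (forall i, (i < n)%nat -> F i <= G i) -> fsum F n <= fsum G n.
Proof. induction n; intros H; simpl; [lra|]. apply Rplus_le_compat; auto. Qed.

Lemma fsum_nonneg (F : nat -> R) (n : nat) : (forall i, 0 <= F i) -> 0 <= fsum F n.
Proof. intros H; induction n; simpl; [lra|]. specialize (H n). lra. Qed.

Lemma fsum_scal (c : R) (F : nat -> R) (n : nat) : fsum (fun i => c * F i) n = c * fsum F n.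
Proof. induction n; simpl; [ring|]. rewrite IHn; ring. Qed.

Lemma fsum_plus (F G : nat -> R) (n : nat) : fsum (fun i => F i + G i) n = fsum F n + fsum G n.
Proof. induction n; simpl; [ring|]. rewrite IHn; ring. Qed.

Lemma fsum_swap (A : nat -> nat -> R) (n m : nat) :
  fsum (fun i => fsum (fun j => A i j) m) n = fsum (fun j => fsum (fun i => A i j) n) m.
Proof.
  induction n; simpl.
  - induction m; simpl; auto. rewrite <- IHm; ring.
  - rewrite IHn, <- fsum_plus. reflexivity.
Qed.

Lemma sum_f_R0_fsum (F : nat -> R) (n : nat) : sum_f_R0 F n = fsum F (S n).
Proof. induction n; simpl; [ring|]. now rewrite IHn. Qed.

Lemma fsum_geom (q : R) (n : nat) : q < 1 -> fsum (fun j => q ^ j) n = (1 - q ^ n) / (1 - q).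
Proof. intros Hq; induction n; simpl; [field; lra|]. rewrite IHn. field. lra. Qed.

Definition cos_coef (w : R -> R) (k : nat) : R := RInt (fun x => w x * cosk k x) 0 1.

Definition cos_partial (w : R -> R) (n : nat) (x : R) : R :=
  fsum (fun i => 2 * cos_coef w (S i) * cosk (S i) x) n.

Lemma continuous_cos_partial (w : R -> R) (n : nat) (x : R) : continuous (cos_partial w n) x.
Proof.
  revert x; induction n as [|n IH]; intros x.
  - apply continuous_const.
  - apply (continuous_ext (fun x => cos_partial w n x + 2 * cos_coef w (S n) * cosk (S n) x));
      [reflexivity|solve_continuity].
Qed.

Lemma RInt_cos_partial_cosk (w : R -> R) (n m : nat) : (n <= m)%nat ->
  RInt (fun x => cos_partial w n x * cosk (S m) x) 0 1 = 0.
Proof.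
  induction n as [|n IH]; intros Hnm.
  - rewrite (RInt_ext _ (fun _ => 0)), RInt_const_R; [apply Rmult_0_r|].
    intros; unfold cos_partial; simpl; ring_R.
  - assert (HP := continuous_cos_partial w n).
    rewrite (RInt_ext _ (fun x => cos_partial w n x * cosk (S m) x
                                  + 2 * cos_coef w (S n) * (cosk (S n) x * cosk (S m) x)))
      by (intros; unfold cos_partial; simpl; ring_R).
    rewrite RInt_plus_R, RInt_scal_R, IH, RInt_cosk_mul by (intros; solve_continuity || lia).
    destruct (Nat.eq_dec (S n) (S m)); [lia|]. ring_R.
Qed.

Lemma RInt_sq_sub_cos_partial (w : R -> R) (n : nat) : (forall x, continuous w x) ->
  RInt (fun x => (w x - cos_partial w n x) ^ 2) 0 1 =
  RInt (fun x => w x ^ 2) 0 1 - 2 * fsum (fun i => cos_coef w (S i) ^ 2) n.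
Proof.
  intros Hw. induction n as [|n IH].
  - rewrite (RInt_ext _ (fun x => w x ^ 2)); [simpl; ring_R|].
    intros; unfold cos_partial; simpl; ring_R.
  - assert (HP := continuous_cos_partial w n).
    set (c := cos_coef w (S n)).
    set (e := fun x => w x - cos_partial w n x).
    assert (He : forall x, continuous e x) by (intros; unfold e; solve_continuity).
    assert (Hec : RInt (fun x => e x * cosk (S n) x) 0 1 = c).
    { rewrite (RInt_ext _ (fun x => w x * cosk (S n) x - cos_partial w n x * cosk (S n) x))
        by (intros; unfold e; ring_R).
      rewrite RInt_minus_R, RInt_cos_partial_cosk by (intros; solve_continuity || lia).
      unfold c, cos_coef. ring_R. }
    rewrite (RInt_ext _ (fun x => e x ^ 2 + (-4 * c) * (e x * cosk (S n) x)
                                  + (4 * c ^ 2) * (cosk (S n) x * cosk (S n) x)))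
      by (intros; unfold e, cos_partial; simpl; fold c; ring_R).
    rewrite !RInt_plus_R, !RInt_scal_R, Hec, RInt_cosk_mul by (intros; solve_continuity || lia).
    unfold e; rewrite IH.
    destruct (Nat.eq_dec (S n) (S n)); [|lia]. simpl; fold c. field_R.
Qed.

Lemma bessel_cos (w : R -> R) (n : nat) : (forall x, continuous w x) ->
  fsum (fun i => cos_coef w (S i) ^ 2) n <= / 2 * RInt (fun x => w x ^ 2) 0 1.
Proof.
  intros Hw. assert (H := RInt_sq_sub_cos_partial w n Hw).
  assert (HP := continuous_cos_partial w n).
  assert (0 <= RInt (fun x => (w x - cos_partial w n x) ^ 2) 0 1).
  { apply RInt_ge_0; [lra| |intros; apply pow2_ge_0].
    apply ex_RInt_continuous_R; intros; solve_continuity. }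
  lra.
Qed.

Lemma RInt_shift_sum_cosk (G : R -> R) (k : nat) (h : R) :
  (forall x, continuous G x) -> (forall z, G (- z) = G z) ->
  (forall z, 0 < z < 1 -> G (2 - z) = G z) -> 0 < h < 1 ->
  RInt (fun x => (G (x + h) + G (x - h)) * cosk k x) 0 1 =
  2 * cos (INR k * PI * h) * RInt (fun x => G x * cosk k x) 0 1.
Proof.
  intros HG HGeven HGrefl Hh.
  set (c := INR k * PI).
  set (F1 := fun y => G y * cos (c * (y - h))).
  set (F2 := fun y => G y * cos (c * (y + h))).
  assert (C1 : forall x, continuous F1 x) by (intros; unfold F1; solve_continuity).
  assert (C2 : forall x, continuous F2 x) by (intros; unfold F2; solve_continuity).
  assert (E1 : RInt (fun x => (G (x + h) + G (x - h)) * cosk k x) 0 1 =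
               RInt (fun x => F1 (x + h)) 0 1 + RInt (fun x => F2 (x + - h)) 0 1).
  { rewrite <- RInt_plus_R by (intros; solve_continuity).
    apply RInt_ext. intros x _. unfold F1, F2, cosk, c.
    replace (x + h - h) with x by ring. replace (x + - h + h) with x by ring.
    replace (x + - h) with (x - h) by ring. ring_R. }
  rewrite E1, !RInt_shift_R, !Rplus_0_l by auto.
  rewrite <- (RInt_Chasles_R F1 C1 h 1 (1 + h)), <- (RInt_Chasles_R F2 C2 (- h) 0 (1 + - h)).
  (* the pieces sticking out of [0, 1] are folded back by the symmetries of [G] *)
  assert (E2 : RInt F1 1 (1 + h) = RInt F2 (1 - h) 1).
  { replace 1 with (2 - 1) at 1 by ring. replace (1 + h) with (2 - (1 - h)) by ring.
    rewrite <- (RInt_reflect_R F1 C1 2 (1 - h) 1).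
    apply RInt_ext. intros x Hx. rewrite Rmin_left, Rmax_right in Hx by lra.
    unfold F1, F2. rewrite HGrefl by lra. f_equal.
    replace (c * (2 - x - h)) with (- (c * (x + h)) + 2 * INR k * PI) by (unfold c; ring).
    rewrite cos_period, cos_neg. reflexivity. }
  assert (E3 : RInt F2 (- h) 0 = RInt F1 0 h).
  { replace (- h) with (0 - h) by ring. replace 0 with (0 - 0) at 2 by ring.
    rewrite <- (RInt_reflect_R F2 C2 0 0 h).
    apply RInt_ext. intros x _. unfold F1, F2.
    replace (0 - x) with (- x) by ring. rewrite HGeven. f_equal.
    replace (c * (- x + h)) with (- (c * (x - h))) by ring. apply cos_neg. }
  rewrite E2, E3. replace (1 + - h) with (1 - h) by ring.
  rewrite <- (RInt_scal_R (fun x => G x * cosk k x)) by (intros; solve_continuity).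
  transitivity (RInt F1 0 1 + RInt F2 0 1).
  { rewrite <- (RInt_Chasles_R F1 C1 0 h 1), <- (RInt_Chasles_R F2 C2 0 (1 - h) 1). ring_R. }
  rewrite <- RInt_plus_R by auto.
  apply RInt_ext. intros x _. unfold F1, F2, cosk, c.
  replace (INR k * PI * (x - h)) with (INR k * PI * x - INR k * PI * h) by ring.
  replace (INR k * PI * (x + h)) with (INR k * PI * x + INR k * PI * h) by ring.
  rewrite cos_minus, cos_plus. ring_R.
Qed.

(* The even, 2-periodic tent map that is the identity on [0, 1]. *)
Definition fold01 (x : R) : R := 1 - Rabs (1 - Rabs x).

Lemma fold01_contraction (x y : R) : Rabs (fold01 x - fold01 y) <= Rabs (x - y).
Proof.
  unfold fold01.
  replace (1 - Rabs (1 - Rabs x) - (1 - Rabs (1 - Rabs y)))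
    with (Rabs (1 - Rabs y) - Rabs (1 - Rabs x)) by ring.
  eapply Rle_trans; [apply Rabs_triang_inv2|].
  replace (1 - Rabs y - (1 - Rabs x)) with (Rabs x - Rabs y) by ring.
  apply Rabs_triang_inv2.
Qed.

Lemma fold01_id (x : R) : 0 <= x <= 1 -> fold01 x = x.
Proof. intros H; unfold fold01. rewrite (Rabs_right x), (Rabs_right (1 - x)) by lra. ring. Qed.

Lemma fold01_opp (x : R) : fold01 (- x) = fold01 x.
Proof. unfold fold01; now rewrite Rabs_Ropp. Qed.

Lemma fold01_reflect (z : R) : 0 < z < 1 -> fold01 (2 - z) = z.
Proof.
  intros H; unfold fold01. rewrite (Rabs_right (2 - z)) by lra.
  replace (1 - (2 - z)) with (- (1 - z)) by ring. rewrite Rabs_Ropp, Rabs_right by lra. ring.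
Qed.

Definition second_diff (G : R -> R) (h x : R) : R := G x - / 2 * (G (x + h) + G (x - h)).

Lemma cos_coef_second_diff_fold (g : R -> R) (h : R) (k : nat) :
  (forall x, continuous g x) -> 0 < h < 1 ->
  cos_coef (second_diff (fun x => g (fold01 x)) h) k = (1 - cos (INR k * PI * h)) * cos_coef g k.
Proof.
  intros Hg Hh. set (G := fun x => g (fold01 x)).
  assert (HG : forall x, continuous G x).
  { intros x; unfold G, fold01. solve_continuity. }
  unfold cos_coef, second_diff.
  rewrite (RInt_ext _ (fun x => G x * cosk k x - / 2 * ((G (x + h) + G (x - h)) * cosk k x)))
    by (intros; ring_R).
  rewrite RInt_minus_R, RInt_scal_R by (intros; solve_continuity).
  rewrite RInt_shift_sum_cosk; auto.
  2: { intros z; unfold G; now rewrite fold01_opp. }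
  2: { intros z Hz; unfold G; rewrite fold01_reflect, fold01_id; auto; lra. }
  rewrite (RInt_ext (fun x => G x * cosk k x) (fun x => g x * cosk k x)).
  - field_R.
  - intros x Hx. rewrite Rmin_left, Rmax_right in Hx by lra. unfold G; rewrite fold01_id; auto; lra.
Qed.

Lemma second_diff_holder_bound (d K : R) (G : R -> R) (h x : R) :
  holder d K G -> 0 < h -> Rabs (second_diff G h x) <= K * Rpower h d.
Proof.
  intros HG Hh. unfold second_diff.
  replace (G x - / 2 * (G (x + h) + G (x - h)))
    with (/ 2 * (G x - G (x + h)) + / 2 * (G x - G (x - h))) by field.
  eapply Rle_trans; [apply Rabs_triang|]. rewrite !Rabs_mult, Rabs_inv, (Rabs_right 2) by lra.
  assert (H1 := HG x (x + h)). assert (H2 := HG x (x - h)).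
  replace (x - (x + h)) with (- h) in H1 by ring. replace (x - (x - h)) with h in H2 by ring.
  rewrite Rabs_Ropp, (Rabs_right h) in H1 by lra. rewrite (Rabs_right h) in H2 by lra. lra.
Qed.

Lemma cos_coef_modulus_bound (d K : R) (g : R -> R) (h : R) (n : nat) :
  0 < d -> 0 <= K -> holder d K g -> 0 < h < 1 ->
  fsum (fun i => ((1 - cos (INR (S i) * PI * h)) * cos_coef g (S i)) ^ 2) n
  <= / 2 * (K * Rpower h d) ^ 2.
Proof.
  intros Hd HK Hg Hh.
  set (G := fun x => g (fold01 x)).
  assert (HGh : holder d K G)
    by (apply (holder_comp_contraction d K g); [lra | exact HK | exact Hg | apply fold01_contraction]).
  assert (HGc : forall x, continuous G x) by (apply (holder_continuous d K); auto).
  assert (Hgc : forall x, continuous g x) by (apply (holder_continuous d K); auto).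
  set (w := second_diff G h).
  assert (Hwc : forall x, continuous w x) by (intros; unfold w, second_diff; solve_continuity).
  assert (Hw2 : RInt (fun x => w x ^ 2) 0 1 <= (K * Rpower h d) ^ 2).
  { eapply Rle_trans.
    - apply (RInt_le _ (fun _ => (K * Rpower h d) ^ 2)); [lra| | |].
      + apply ex_RInt_continuous_R; intros; solve_continuity.
      + apply ex_RInt_continuous_R; intros; solve_continuity.
      + intros x _. apply pow_maj_Rabs, (second_diff_holder_bound d); auto; lra.
    - rewrite RInt_const_R. lra. }
  rewrite <- (fsum_ext (fun i => cos_coef w (S i) ^ 2)).
  - assert (Hb := bessel_cos w n Hwc). lra.
  - intros i _. unfold w, G. now rewrite cos_coef_second_diff_fold.
Qed.

Lemma INR_lt_pow2 (n : nat) : INR n < 2 ^ n.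
Proof.
  induction n; [simpl; lra|]. rewrite S_INR.
  assert (1 <= 2 ^ n) by (apply pow_R1_Rle; lra). simpl. lra.
Qed.

Lemma cos_dyadic_nonpos (k J : nat) :
  2 ^ J <= INR k < 2 ^ S J -> cos (INR k * PI * / 2 ^ S J) <= 0.
Proof.
  intros HJ. simpl in HJ |- *.
  assert (Hp : 0 < 2 ^ J) by (apply pow_lt; lra).
  set (t := INR k / 2 ^ J).
  assert (Ht : 1 <= t < 2) by (unfold t; split; [apply Rle_div_r|apply Rlt_div_l]; lra).
  replace (INR k * PI * / (2 * 2 ^ J)) with (t * (PI / 2)) by (unfold t; field; lra).
  assert (HP := PI_RGT_0). apply cos_le_0; nra.
Qed.

Definition dyadic_weight (e : R) (k j : nat) : R :=
  Rpower (2 ^ S j) e * (1 - cos (INR k * PI * / 2 ^ S j)) ^ 2.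

Lemma dyadic_weight_nonneg (e : R) (k j : nat) : 0 <= dyadic_weight e k j.
Proof. apply Rmult_le_pos; [left; apply Rpower_pos | apply pow2_ge_0]. Qed.

(* The dyadic scale [2^(S j)] just above [k] already contributes [k^e]. *)
Lemma Rpower_le_dyadic_weights (e : R) (k J : nat) : 0 <= e -> (1 <= k)%nat -> INR k < 2 ^ J ->
  Rpower (INR k) e <= fsum (dyadic_weight e k) J.
Proof.
  intros He Hk. assert (Hk' : 1 <= INR k) by (apply (le_INR 1); auto).
  induction J as [|J IH]; intros HJ; simpl in HJ |- *; [lra|].
  assert (Hw := dyadic_weight_nonneg e k J).
  destruct (Rlt_le_dec (INR k) (2 ^ J)) as [L|L]; [specialize (IH L); lra|].
  assert (Hs := fsum_nonneg (dyadic_weight e k) J (dyadic_weight_nonneg e k)).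
  assert (Hc := cos_dyadic_nonpos k J ltac:(simpl; lra)).
  assert (Hpow : Rpower (INR k) e <= Rpower (2 ^ S J) e) by (apply Rle_Rpower_l; simpl; lra).
  assert (Hcos : 1 <= (1 - cos (INR k * PI * / 2 ^ S J)) ^ 2) by nra.
  assert (0 < Rpower (2 ^ S J) e) by apply Rpower_pos.
  unfold dyadic_weight at 2. nra.
Qed.

Lemma Rpower_dyadic_product (e d : R) (j : nat) :
  Rpower (2 ^ j) e * Rpower (/ 2 ^ j) d ^ 2 = Rpower 2 (e - 2 * d) ^ j.
Proof.
  rewrite <- (Rpower_pow j (Rpower 2 (e - 2 * d))) by apply Rpower_pos. rewrite Rpower_mult.
  unfold Rpower. rewrite ln_Rinv by (apply pow_lt; lra). rewrite ln_pow by lra.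
  simpl. rewrite Rmult_1_r, <- !exp_plus. f_equal. ring.
Qed.

(* Dominate [k^e] by the dyadic weights, exchange the sums, and bound each dyadic block
   with [h = 2^-(j+1)]: the blocks decay geometrically with ratio [2^(e - 2d)]. *)
Lemma weighted_cos_coef_bound (e d K : R) (g : R -> R) (N : nat) :
  0 <= e -> e < 2 * d -> 0 <= K -> holder d K g ->
  fsum (fun i => Rpower (INR (S i)) e * cos_coef g (S i) ^ 2) N
  <= / 2 * K ^ 2 / (1 - Rpower 2 (e - 2 * d)).
Proof.
  intros He Hed HK Hg.
  set (q := Rpower 2 (e - 2 * d)).
  assert (Hq1 : q < 1) by (unfold q; rewrite <- (Rpower_O 2) by lra; apply Rpower_lt; lra).
  assert (Hq0 : 0 < q) by apply Rpower_pos.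
  eapply Rle_trans.
  { apply (fsum_le _ (fun i => fsum (fun j => Rpower (2 ^ S j) e *
      ((1 - cos (INR (S i) * PI * / 2 ^ S j)) * cos_coef g (S i)) ^ 2) N)).
    intros i Hi.
    rewrite (fsum_ext _ (fun j => cos_coef g (S i) ^ 2 * dyadic_weight e (S i) j))
      by (intros; unfold dyadic_weight; ring).
    rewrite fsum_scal, Rmult_comm. apply Rmult_le_compat_l; [apply pow2_ge_0|].
    apply Rpower_le_dyadic_weights; [auto|lia|].
    apply (Rle_lt_trans _ (INR N)); [apply le_INR; lia | apply INR_lt_pow2]. }
  rewrite fsum_swap.
  eapply Rle_trans.
  { apply (fsum_le _ (fun j => Rpower (2 ^ S j) e * (/ 2 * (K * Rpower (/ 2 ^ S j) d) ^ 2))).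
    intros j _. rewrite fsum_scal. apply Rmult_le_compat_l; [left; apply Rpower_pos|].
    assert (1 < 2 ^ S j) by (apply Rlt_pow_R1; [lra|lia]).
    apply cos_coef_modulus_bound; auto; [lra|]. split.
    - apply Rinv_0_lt_compat; lra.
    - rewrite <- Rinv_1. apply Rinv_lt_contravar; lra. }
  rewrite (fsum_ext _ (fun j => (/ 2 * K ^ 2 * q) * q ^ j)).
  2: { intros j _. replace (/ 2 * K ^ 2 * q * q ^ j) with (/ 2 * K ^ 2 * q ^ S j) by (simpl; ring).
       unfold q. rewrite <- Rpower_dyadic_product. ring. }
  rewrite fsum_scal, fsum_geom by auto.
  assert (0 <= q ^ N) by (apply pow_le; lra).
  assert (q * (1 - q ^ N) <= 1) by nra.
  unfold Rdiv. rewrite <- Rmult_assoc.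
  apply Rmult_le_compat_r; [left; apply Rinv_0_lt_compat; lra|].
  assert (0 <= / 2 * K ^ 2) by nra. nra.
Qed.

Lemma RInt_mul_ek' (g : R -> R) (k : nat) : (forall x, continuous g x) ->
  RInt (fun x => g x * ek' k x) 0 1 = sqrt 2 * (INR k * PI) * cos_coef g k.
Proof.
  intros Hg. unfold cos_coef. rewrite <- RInt_scal_R by (intros; solve_continuity).
  apply RInt_ext; intros; unfold ek', cosk. ring_R.
Qed.

Lemma Hterm_opp_RInt_ek' (alpha : R) (g : R -> R) (m : nat) : (forall x, continuous g x) ->
  Hterm (- (alpha / 2)) (fun k => - RInt (fun x => g x * ek' k x) 0 1) m =
  2 * Rpower PI (2 - alpha) * (Rpower (INR (S m)) (2 - alpha) * cos_coef g (S m) ^ 2).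
Proof.
  intros Hg. unfold Hterm, lam. rewrite RInt_mul_ek' by auto.
  assert (Hm : 0 < INR (S m)) by (apply lt_0_INR; lia).
  assert (HP := PI_RGT_0).
  replace ((- (sqrt 2 * (INR (S m) * PI) * cos_coef g (S m))) ^ 2)
    with (sqrt 2 ^ 2 * (INR (S m) * PI) ^ 2 * cos_coef g (S m) ^ 2) by ring.
  rewrite pow2_sqrt by lra.
  rewrite <- (Rpower_pow 2 (INR (S m) * PI)) by nra. simpl (INR 2).
  rewrite Rpower_mult.
  set (x := INR (S m) * PI).
  transitivity (2 * (Rpower x ((1 + 1) * - (alpha / 2)) * Rpower x (1 + 1)) * cos_coef g (S m) ^ 2);
    [ring|].
  rewrite <- Rpower_plus.
  replace ((1 + 1) * - (alpha / 2) + (1 + 1)) with (2 - alpha) by field.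
  unfold x. rewrite <- Rpower_mult_distr by lra. ring.
Qed.

Definition Hconst (alpha d : R) : R :=
  Rpower PI (2 - alpha) / (1 - Rpower 2 (2 - alpha - 2 * d)).

Section HtermBounds.

Variables (alpha d K : R) (g : R -> R).
Hypothesis Halpha : 1 < alpha <= 2.
Hypothesis Hd : 1 - alpha / 2 < d.
Hypothesis HK : 0 <= K.
Hypothesis Hg : holder d K g.

Let Hgc : forall x, continuous g x.
Proof. apply (holder_continuous d K); auto; lra. Qed.

Lemma Hterm_cos_nonneg (m : nat) :
  0 <= Hterm (- (alpha / 2)) (fun k => - RInt (fun x => g x * ek' k x) 0 1) m.
Proof.
  rewrite Hterm_opp_RInt_ek' by exact Hgc.
  assert (0 < Rpower PI (2 - alpha)) by apply Rpower_pos.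
  assert (0 < Rpower (INR (S m)) (2 - alpha)) by apply Rpower_pos.
  assert (0 <= cos_coef g (S m) ^ 2) by apply pow2_ge_0.
  apply Rmult_le_pos; apply Rmult_le_pos; lra.
Qed.

Lemma Hterm_cos_partial_sum_le (N : nat) :
  sum_f_R0 (Hterm (- (alpha / 2)) (fun k => - RInt (fun x => g x * ek' k x) 0 1)) N
  <= Hconst alpha d * K ^ 2.
Proof.
  rewrite sum_f_R0_fsum, (fsum_ext _ (fun m => 2 * Rpower PI (2 - alpha) *
    (Rpower (INR (S m)) (2 - alpha) * cos_coef g (S m) ^ 2)))
    by (intros; apply Hterm_opp_RInt_ek', Hgc).
  rewrite fsum_scal.
  assert (Hq : Rpower 2 (2 - alpha - 2 * d) < 1)
    by (rewrite <- (Rpower_O 2) by lra; apply Rpower_lt; lra).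
  assert (0 < Rpower PI (2 - alpha)) by apply Rpower_pos.
  eapply Rle_trans.
  - apply Rmult_le_compat_l; [lra|]. apply (weighted_cos_coef_bound _ d K); auto; lra.
  - right. unfold Hconst. field. lra.
Qed.

End HtermBounds.

Definition lipschitz_on (M L : R) (F : R -> R) : Prop :=
  forall x y, Rabs x <= M -> Rabs y <= M -> Rabs (F x - F y) <= L * Rabs (x - y).

(* The bound that makes [x |-> F (u x) - F (v x)] Hoelder with a constant proportional to
   [|u - v|_{C^delta}]: apply it with [p1, q1, p2, q2 = u x, v x, u y, v y]. *)
Definition diff_lipschitz_on (M K : R) (F : R -> R) : Prop :=
  forall p1 q1 p2 q2, Rabs p1 <= M -> Rabs q1 <= M -> Rabs p2 <= M -> Rabs q2 <= M ->
  Rabs ((F p1 - F q1) - (F p2 - F q2)) <=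
  K * (Rabs ((p1 - q1) - (p2 - q2)) + Rabs (p2 - q2) * (Rabs (p1 - p2) + Rabs (q1 - q2))).

Section ProductRule.

Variables (M BF BG LF LG KF KG : R) (F G : R -> R).
Hypothesis HBF : forall x, Rabs x <= M -> Rabs (F x) <= BF.
Hypothesis HBG : forall x, Rabs x <= M -> Rabs (G x) <= BG.
Hypothesis HLF : lipschitz_on M LF F.
Hypothesis HLG : lipschitz_on M LG G.

Lemma lipschitz_on_mult : 0 <= LF -> 0 <= LG ->
  lipschitz_on M (LF * BG + BF * LG) (fun x => F x * G x).
Proof.
  intros HLF0 HLG0 x y Hx Hy.
  replace (F x * G x - F y * G y) with ((F x - F y) * G x + F y * (G x - G y)) by ring.
  eapply Rle_trans; [apply Rabs_triang|]. rewrite !Rabs_mult.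
  assert (H1 := HLF x y Hx Hy). assert (H2 := HLG x y Hx Hy).
  assert (H3 := HBG x Hx). assert (H4 := HBF y Hy).
  assert (Rabs (F x - F y) * Rabs (G x) <= LF * Rabs (x - y) * BG)
    by (apply Rmult_le_compat; auto using Rabs_pos).
  assert (Rabs (F y) * Rabs (G x - G y) <= BF * (LG * Rabs (x - y)))
    by (apply Rmult_le_compat; auto using Rabs_pos).
  nra.
Qed.

Lemma diff_lipschitz_on_mult : 0 <= KF -> 0 <= KG -> 0 <= LF -> 0 <= LG ->
  diff_lipschitz_on M KF F -> diff_lipschitz_on M KG G ->
  diff_lipschitz_on M (KF * BG + BF * KG + LF * LG) (fun x => F x * G x).
Proof.
  intros HKF0 HKG0 HLF0 HLG0 HKF HKG p1 q1 p2 q2 H1 H2 H3 H4.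
  set (E := Rabs ((p1 - q1) - (p2 - q2)) + Rabs (p2 - q2) * (Rabs (p1 - p2) + Rabs (q1 - q2))).
  replace (F p1 * G p1 - F q1 * G q1 - (F p2 * G p2 - F q2 * G q2)) with
    (((F p1 - F q1) - (F p2 - F q2)) * G p1 + (F p2 - F q2) * (G p1 - G p2)
     + F q1 * ((G p1 - G q1) - (G p2 - G q2)) + (F q1 - F q2) * (G p2 - G q2)) by ring.
  assert (HE : Rabs (p2 - q2) * Rabs (p1 - p2) + Rabs (q1 - q2) * Rabs (p2 - q2) <= E).
  { unfold E. assert (0 <= Rabs ((p1 - q1) - (p2 - q2))) by apply Rabs_pos. nra. }
  assert (A1 : Rabs (((F p1 - F q1) - (F p2 - F q2)) * G p1) <= KF * E * BG).
  { rewrite Rabs_mult. apply Rmult_le_compat; auto using Rabs_pos. }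
  assert (A2 : Rabs ((F p2 - F q2) * (G p1 - G p2))
               <= LF * Rabs (p2 - q2) * (LG * Rabs (p1 - p2))).
  { rewrite Rabs_mult. apply Rmult_le_compat; auto using Rabs_pos. }
  assert (A3 : Rabs (F q1 * ((G p1 - G q1) - (G p2 - G q2))) <= BF * (KG * E)).
  { rewrite Rabs_mult. apply Rmult_le_compat; auto using Rabs_pos. }
  assert (A4 : Rabs ((F q1 - F q2) * (G p2 - G q2))
               <= LF * Rabs (q1 - q2) * (LG * Rabs (p2 - q2))).
  { rewrite Rabs_mult. apply Rmult_le_compat; auto using Rabs_pos. }
  assert (0 <= LF * LG) by nra.
  assert (LF * LG * (Rabs (p2 - q2) * Rabs (p1 - p2) + Rabs (q1 - q2) * Rabs (p2 - q2))
          <= LF * LG * E) by (apply Rmult_le_compat_l; auto).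
  eapply Rle_trans; [apply Rabs_triang|].
  eapply Rle_trans; [apply Rplus_le_compat_r, Rabs_triang|].
  eapply Rle_trans; [apply Rplus_le_compat_r, Rplus_le_compat_r, Rabs_triang|].
  lra.
Qed.

End ProductRule.

Lemma diff_lipschitz_on_add_scal (M KF KG c : R) (F G : R -> R) :
  diff_lipschitz_on M KF F -> diff_lipschitz_on M KG G ->
  diff_lipschitz_on M (KF + Rabs c * KG) (fun x => F x + c * G x).
Proof.
  intros HF HG p1 q1 p2 q2 H1 H2 H3 H4.
  replace (F p1 + c * G p1 - (F q1 + c * G q1) - (F p2 + c * G p2 - (F q2 + c * G q2)))
    with ((F p1 - F q1 - (F p2 - F q2)) + c * (G p1 - G q1 - (G p2 - G q2))) by ring.
  eapply Rle_trans; [apply Rabs_triang|]. rewrite Rabs_mult.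
  assert (A1 := HF p1 q1 p2 q2 H1 H2 H3 H4). assert (A2 := HG p1 q1 p2 q2 H1 H2 H3 H4).
  assert (Rabs c * Rabs (G p1 - G q1 - (G p2 - G q2)) <= Rabs c * (KG *
    (Rabs (p1 - q1 - (p2 - q2)) + Rabs (p2 - q2) * (Rabs (p1 - p2) + Rabs (q1 - q2)))))
    by (apply Rmult_le_compat_l; auto using Rabs_pos).
  lra.
Qed.

Lemma pow_abs_le (M y : R) (i : nat) : Rabs y <= M -> Rabs (y ^ i) <= M ^ i.
Proof. intros H. rewrite <- RPow_abs. apply pow_incr. split; auto using Rabs_pos. Qed.

Lemma pow_lipschitz_diff_lipschitz (M : R) (i : nat) : 0 <= M ->
  exists L K, 0 <= L /\ 0 <= K /\
    lipschitz_on M L (fun x => x ^ i) /\ diff_lipschitz_on M K (fun x => x ^ i).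
Proof.
  intros HM. induction i as [|i [L [K [HL [HK [HLip HDiff]]]]]].
  - exists 0, 0. repeat split; try lra.
    + intros x y _ _. simpl. rewrite Rminus_diag, Rabs_R0. lra.
    + intros p1 q1 p2 q2 _ _ _ _. simpl. replace (1 - 1 - (1 - 1)) with 0 by ring.
      rewrite Rabs_R0, Rmult_0_l. lra.
  - assert (HMi : 0 <= M ^ i) by (apply pow_le; auto).
    assert (Hid_bound : forall x, Rabs x <= M -> Rabs x <= M) by auto.
    assert (Hpow_bound : forall x, Rabs x <= M -> Rabs (x ^ i) <= M ^ i)
      by (intros; apply pow_abs_le; auto).
    assert (Hid_lip : lipschitz_on M 1 (fun x => x)) by (intros x y _ _; lra).
    assert (Hid_diff : diff_lipschitz_on M 1 (fun x => x)).
    { intros p1 q1 p2 q2 _ _ _ _.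
      pose proof (Rabs_pos (p2 - q2)). pose proof (Rabs_pos (p1 - p2)).
      pose proof (Rabs_pos (q1 - q2)). nra. }
    exists (1 * M ^ i + M * L), (1 * M ^ i + M * K + 1 * L). repeat split.
    + nra.
    + nra.
    + apply (lipschitz_on_mult M M (M ^ i) 1 L (fun x => x) (fun x => x ^ i)); auto; lra.
    + apply (diff_lipschitz_on_mult M M (M ^ i) 1 L 1 K (fun x => x) (fun x => x ^ i)); auto; lra.
Qed.

Lemma diff_lipschitz_on_polyR (a : nat -> R) (n : nat) (M : R) : 0 <= M ->
  exists K, 0 <= K /\ diff_lipschitz_on M K (polyR a n).
Proof.
  intros HM. induction n as [|n [K [HK HP]]].
  - exists 0. split; [lra|]. intros p1 q1 p2 q2 _ _ _ _. unfold polyR; simpl.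
    replace (a 0%nat * 1 - a 0%nat * 1 - (a 0%nat * 1 - a 0%nat * 1)) with 0 by ring.
    rewrite Rabs_R0, Rmult_0_l. lra.
  - destruct (pow_lipschitz_diff_lipschitz M (S n) HM) as [_ [K' [_ [HK' [_ HP']]]]].
    exists (K + Rabs (a (S n)) * K'). split.
    + assert (0 <= Rabs (a (S n))) by apply Rabs_pos. nra.
    + exact (diff_lipschitz_on_add_scal M K K' (a (S n)) (polyR a n) (fun x => x ^ S n) HP HP').
Qed.

Definition clamp (x : R) : R := Rmax 0 (Rmin 1 x).

Lemma clamp_in (x : R) : 0 <= clamp x <= 1.
Proof. unfold clamp, Rmax, Rmin. repeat destruct Rle_dec; lra. Qed.

Lemma clamp_id (x : R) : 0 <= x <= 1 -> clamp x = x.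
Proof. intros H. unfold clamp, Rmax, Rmin. repeat destruct Rle_dec; lra. Qed.

Lemma clamp_contraction (x y : R) : Rabs (clamp x - clamp y) <= Rabs (x - y).
Proof. unfold clamp, Rmax, Rmin, Rabs. repeat destruct Rle_dec; repeat destruct Rcase_abs; lra. Qed.

Lemma holder_bounds_nonneg (d A B : R) (u : R -> R) : holder_bounds d u A B -> 0 <= A /\ 0 <= B.
Proof.
  intros [H1 H2]. split.
  - eapply Rle_trans; [apply Rabs_pos | apply (H1 0); lra].
  - assert (H := H2 0 1 ltac:(lra) ltac:(lra) ltac:(lra)).
    replace (Rabs (0 - 1)) with 1 in H by (rewrite Rabs_left; lra).
    unfold Rpower in H. rewrite ln_1, Rmult_0_r, exp_0, Rmult_1_r in H.
    eapply Rle_trans; [apply Rabs_pos | exact H].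
Qed.

Lemma holder_bounds_clamp (d A B : R) (u : R -> R) : 0 <= d -> holder_bounds d u A B ->
  (forall x, Rabs (u (clamp x)) <= A) /\ holder d B (fun x => u (clamp x)).
Proof.
  intros Hd Hu. destruct (holder_bounds_nonneg d A B u Hu) as [_ HB].
  destruct Hu as [H1 H2]. split.
  - intros x. apply H1, clamp_in.
  - intros x y. destruct (Req_dec (clamp x) (clamp y)) as [E|E].
    + rewrite E, Rminus_diag, Rabs_R0. apply Rmult_le_pos; [auto | left; apply Rpower_pos].
    + eapply Rle_trans; [apply H2; auto using clamp_in|].
      apply Rmult_le_compat_l; auto. apply Rle_Rpower_l; [lra|].
      split; [apply Rabs_pos_lt; lra | apply clamp_contraction].
Qed.

Definition clamped_poly (a : nat -> R) (n : nat) (u : R -> R) (x : R) : R :=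
  polyR a n (u (clamp x)).

Lemma holder_clamped_poly_sub (d K R0 A B Au Bu Av Bv : R) (a : nat -> R) (n : nat)
    (u v : R -> R) :
  0 <= d -> 0 <= K -> diff_lipschitz_on R0 K (polyR a n) ->
  holder_bounds d u Au Bu -> Au + Bu <= R0 ->
  holder_bounds d v Av Bv -> Av + Bv <= R0 ->
  holder_bounds d (fun x => u x - v x) A B ->
  holder d (K * (1 + 2 * R0) * (A + B)) (fun x => clamped_poly a n u x - clamped_poly a n v x).
Proof.
  intros Hd HK HP Hu HuR Hv HvR Hw.
  destruct (holder_bounds_nonneg d Au Bu u Hu) as [HAu HBu].
  destruct (holder_bounds_nonneg d Av Bv v Hv) as [HAv HBv].
  destruct (holder_bounds_nonneg d A B _ Hw) as [HA HB].
  destruct (holder_bounds_clamp d Au Bu u Hd Hu) as [Hu1 Hu2].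
  destruct (holder_bounds_clamp d Av Bv v Hd Hv) as [Hv1 Hv2].
  destruct (holder_bounds_clamp d A B _ Hd Hw) as [Hw1 Hw2].
  intros x y. unfold clamped_poly.
  set (P := Rpower (Rabs (x - y)) d).
  assert (HP0 : 0 < P) by apply Rpower_pos.
  specialize (Hu1 x) as Hux. specialize (Hu1 y) as Huy.
  specialize (Hv1 x) as Hvx. specialize (Hv1 y) as Hvy.
  eapply Rle_trans; [apply HP; lra|].
  rewrite Rmult_assoc, Rmult_assoc. apply Rmult_le_compat_l; [exact HK|].
  assert (E1 := Hw2 x y). assert (E2 := Hw1 y). assert (E3 := Hu2 x y). assert (E4 := Hv2 x y).
  simpl in E1, E2, E3, E4. fold P in E1, E3, E4.
  assert (Rabs (u (clamp y) - v (clamp y)) * (Rabs (u (clamp x) - u (clamp y))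
            + Rabs (v (clamp x) - v (clamp y))) <= A * (2 * R0 * P)).
  { apply Rmult_le_compat; auto using Rabs_pos.
    - pose proof (Rabs_pos (u (clamp x) - u (clamp y))).
      pose proof (Rabs_pos (v (clamp x) - v (clamp y))). lra.
    - assert (Bu * P <= R0 * P) by (apply Rmult_le_compat_r; lra).
      assert (Bv * P <= R0 * P) by (apply Rmult_le_compat_r; lra). lra. }
  assert (0 <= R0 * (B * P)) by (apply Rmult_le_pos; [lra | apply Rmult_le_pos; lra]).
  assert (0 <= A * P) by (apply Rmult_le_pos; lra).
  lra.
Qed.

Lemma holder_clamped_poly (d A B : R) (a : nat -> R) (n : nat) (u : R -> R) :
  0 <= d -> holder_bounds d u A B -> exists K, 0 <= K /\ holder d K (clamped_poly a n u).
Proof.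
  intros Hd Hu. destruct (holder_bounds_nonneg d A B u Hu) as [HA HB].
  destruct (diff_lipschitz_on_polyR a n (A + B) ltac:(lra)) as [K [HK HP]].
  assert (H0 : holder_bounds d (fun _ => 0) 0 0).
  { split; intros; rewrite ?Rminus_diag, Rabs_R0; lra. }
  assert (Hu0 : holder_bounds d (fun x => u x - 0) A B).
  { destruct Hu as [H1 H2]. split; intros; rewrite ?Rminus_0_r; auto. }
  exists (K * (1 + 2 * (A + B)) * (A + B)). split; [apply Rmult_le_pos; nra|].
  intros x y.
  assert (H := holder_clamped_poly_sub d K (A + B) A B A B 0 0 a n u (fun _ => 0)
                 Hd HK HP Hu ltac:(lra) H0 ltac:(lra) Hu0 x y).
  unfold clamped_poly in *.
  replace (polyR a n (u (clamp x)) - polyR a n (u (clamp y))) with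
    (polyR a n (u (clamp x)) - polyR a n 0 - (polyR a n (u (clamp y)) - polyR a n 0)) by ring.
  exact H.
Qed.

Lemma Rint_eq_RInt (f : R -> R) (a b : R) : ex_RInt f a b -> Rint f a b = RInt f a b.
Proof.
  intros H. unfold Rint.
  destruct (excluded_middle_informative _) as [e|ne].
  - destruct (constructive_indefinite_description _ e) as [pr _].
    symmetry; apply RInt_Reals.
  - exfalso; apply ne. exists (ex_RInt_Reals_0 _ _ _ H). auto.
Qed.

Section Coefficients.

Variables (a : nat -> R) (n : nat) (u : R -> R).
Hypothesis Hu : forall x, continuous (clamped_poly a n u) x.

Lemma ex_RInt_polyR_ek' (k : nat) : ex_RInt (fun x => polyR a n (u x) * ek' k x) 0 1.
Proof.
  apply (ex_RInt_ext (fun x => clamped_poly a n u x * ek' k x)).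
  - intros x Hx. rewrite Rmin_left, Rmax_right in Hx by lra.
    unfold clamped_poly. rewrite clamp_id; auto; lra.
  - apply ex_RInt_continuous_R. intros; unfold ek'; solve_continuity.
Qed.

Lemma Fcoef_clamped_poly (k : nat) :
  Fcoef a n u k = - RInt (fun x => clamped_poly a n u x * ek' k x) 0 1.
Proof.
  unfold Fcoef. rewrite Rint_eq_RInt by apply ex_RInt_polyR_ek'. f_equal.
  apply RInt_ext. intros x Hx. rewrite Rmin_left, Rmax_right in Hx by lra.
  unfold clamped_poly. rewrite clamp_id; auto; lra.
Qed.

End Coefficients.

Lemma infinite_sum_le (F : nat -> R) (S b : R) :
  infinite_sum F S -> (forall N, sum_f_R0 F N <= b) -> S <= b.
Proof.
  intros HS Hb. destruct (Rle_dec S b) as [|Hn]; auto. exfalso.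
  destruct (HS (S - b) ltac:(lra)) as [N HN].
  specialize (HN N (Nat.le_refl N)). specialize (Hb N).
  unfold Rdist in HN. apply Rabs_def2 in HN. lra.
Qed.

Lemma Hconst_nonneg (alpha d : R) : 1 - alpha / 2 < d -> 0 <= Hconst alpha d.
Proof.
  intros Hd. assert (Hq : Rpower 2 (2 - alpha - 2 * d) < 1)
    by (rewrite <- (Rpower_O 2) by lra; apply Rpower_lt; lra).
  apply Rmult_le_pos; [left; apply Rpower_pos | left; apply Rinv_0_lt_compat; lra].
Qed.

Section MainEstimates.

Variables (alpha delta : R) (a : nat -> R) (n : nat).
Hypothesis Halpha : 1 < alpha <= 2.
Hypothesis Hdelta : 1 - alpha / 2 < delta < 1.

Lemma Fcoef_H_summable (u : R -> R) : in_Cdelta delta u ->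
  exists S, infinite_sum (Hterm (- (alpha / 2)) (Fcoef a n u)) S.
Proof.
  intros [A [B Hu]].
  destruct (holder_clamped_poly delta A B a n u) as [K [HK Hg]]; [lra | exact Hu |].
  assert (Hc := holder_continuous delta K _ ltac:(lra) HK Hg).
  replace (Fcoef a n u) with (fun k => - RInt (fun x => clamped_poly a n u x * ek' k x) 0 1)
    by (extensionality k; symmetry; apply Fcoef_clamped_poly, Hc).
  destruct (growing_cv (sum_f_R0 (Hterm (- (alpha / 2))
              (fun k => - RInt (fun x => clamped_poly a n u x * ek' k x) 0 1)))) as [l Hl].
  - intros N. simpl.
    assert (H := Hterm_cos_nonneg alpha delta K _ Halpha (proj1 Hdelta) HK Hg (S N)). lra.
  - exists (Hconst alpha delta * K ^ 2). intros y [N ->].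
    apply (Hterm_cos_partial_sum_le alpha delta K); auto; lra.
  - exists l. exact Hl.
Qed.

Lemma Fcoef_sub_H_bound (R0 K Au Bu Av Bv A B S : R) (u v : R -> R) :
  0 <= K -> diff_lipschitz_on R0 K (polyR a n) ->
  holder_bounds delta u Au Bu -> Au + Bu <= R0 ->
  holder_bounds delta v Av Bv -> Av + Bv <= R0 ->
  holder_bounds delta (fun x => u x - v x) A B ->
  infinite_sum (Hterm (- (alpha / 2)) (fun k => Fcoef a n u k - Fcoef a n v k)) S ->
  sqrt S <= sqrt (Hconst alpha delta) * (K * (1 + 2 * R0) * (A + B)).
Proof.
  intros HK HP Hu HuR Hv HvR Hw HS.
  destruct (holder_bounds_nonneg _ _ _ _ Hw) as [HA HB].
  assert (HKg : 0 <= K * (1 + 2 * R0) * (A + B))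
    by (destruct (holder_bounds_nonneg _ _ _ _ Hu); apply Rmult_le_pos; nra).
  assert (Hg := holder_clamped_poly_sub delta K R0 A B Au Bu Av Bv a n u v
                  ltac:(lra) HK HP Hu HuR Hv HvR Hw).
  destruct (holder_clamped_poly delta Au Bu a n u) as [Ku [HKu Hgu]]; [lra | exact Hu |].
  destruct (holder_clamped_poly delta Av Bv a n v) as [Kv [HKv Hgv]]; [lra | exact Hv |].
  assert (Hcu := holder_continuous delta Ku _ ltac:(lra) HKu Hgu).
  assert (Hcv := holder_continuous delta Kv _ ltac:(lra) HKv Hgv).
  replace (fun k => Fcoef a n u k - Fcoef a n v k) with
    (fun k => - RInt (fun x => (clamped_poly a n u x - clamped_poly a n v x) * ek' k x) 0 1) in HS.
  2: { extensionality k. rewrite !Fcoef_clamped_poly by auto.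
       rewrite (RInt_ext _ (fun x => clamped_poly a n u x * ek' k x
                                     - clamped_poly a n v x * ek' k x)) by (intros; ring_R).
       rewrite RInt_minus_R by (intros; unfold ek'; solve_continuity). ring_R. }
  assert (HSle := infinite_sum_le _ _ _ HS
                    (Hterm_cos_partial_sum_le alpha delta _ _ Halpha ltac:(lra) HKg Hg)).
  rewrite <- (sqrt_pow2 (K * (1 + 2 * R0) * (A + B))) by exact HKg.
  rewrite <- sqrt_mult by (apply pow2_ge_0 || (apply Hconst_nonneg; lra)).
  apply sqrt_le_1_alt, HSle.
Qed.

End MainEstimates.

Theorem mainTheorem9 (alpha delta : R) (a : nat -> R) (n : nat) :
  1 < alpha <= 2 ->
  1 - alpha / 2 < delta < 1 ->
  (forall u : R -> R, in_Cdelta delta u ->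
     (forall k : nat, (1 <= k)%nat ->
        inhabited (Riemann_integrable (fun x => polyR a n (u x) * ek' k x) 0 1)) /\
     exists S : R, infinite_sum (Hterm (- (alpha / 2)) (Fcoef a n u)) S) /\
  (forall R0 : R, 0 < R0 -> exists C : R, 0 < C /\
     forall (u v : R -> R) (Au Bu Av Bv : R),
       holder_bounds delta u Au Bu -> Au + Bu <= R0 ->
       holder_bounds delta v Av Bv -> Av + Bv <= R0 ->
       forall S : R,
         infinite_sum (Hterm (- (alpha / 2)) (fun k => Fcoef a n u k - Fcoef a n v k)) S ->
         forall A B : R, holder_bounds delta (fun x => u x - v x) A B ->
           sqrt S <= C * (A + B)).
Proof.
  intros Halpha Hdelta. split.
  - intros u Hu. split; [|exact (Fcoef_H_summable alpha delta a n Halpha Hdelta u Hu)].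
    intros k _. destruct Hu as [A [B Hu]].
    destruct (holder_clamped_poly delta A B a n u) as [K [HK Hg]]; [lra | exact Hu |].
    constructor. apply ex_RInt_Reals_0, ex_RInt_polyR_ek'.
    exact (holder_continuous delta K _ ltac:(lra) HK Hg).
  - intros R0 HR0.
    destruct (diff_lipschitz_on_polyR a n R0 ltac:(lra)) as [K [HK HP]].
    set (C0 := sqrt (Hconst alpha delta) * (K * (1 + 2 * R0))).
    assert (HC0 : 0 <= C0) by (apply Rmult_le_pos; [apply sqrt_pos | nra]).
    exists (C0 + 1). split; [lra|].
    intros u v Au Bu Av Bv Hu HuR Hv HvR S HS A B Hw.
    destruct (holder_bounds_nonneg _ _ _ _ Hw) as [HA HB].
    eapply Rle_trans; [exact (Fcoef_sub_H_bound alpha delta a n Halpha Hdelta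
                               R0 K Au Bu Av Bv A B S u v HK HP Hu HuR Hv HvR Hw HS)|].
    unfold C0. rewrite <- Rmult_assoc. apply Rmult_le_compat_r; lra.
Qed.
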